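(* Let $B=(b_{pq})\in\mathcal A_n$ and $R_{ij}^{kl}\in E(B)$ (with $i<j$, $k<l$), and let $A=(a_{pq})$ be any real $n\times n$ matrix. Then the following are equivalent: (1) $A\in\mathcal A_n$ and $A\xrightarrow{ij,kl}B$ in the ASM graph; (2) $a_{ik}-b_{ik}=1$, $a_{il}-b_{il}=-1$, $a_{jk}-b_{jk}=-1$, $a_{jl}-b_{jl}=1$, and $a_{pq}=b_{pq}$ for every $(p,q)\notin\{(i,k),(i,l),(j,k),(j,l)\}$.
   Context: An $n\times n$ matrix $A=(a_{ij})$ is an alternating sign matrix (ASM) if all $a_{ij}\in\{-1,0,1\}$, all partial row sums $\sum_{k\le j}a_{ik}$ and partial column sums $\sum_{k\le i}a_{kj}$ lie in $\{0,1\}$, and every full row sum and column sum equals $1$; $\mathcal A_n$ is the set of $n\times n$ ASMs. The corner sum matrix is $\widetilde A(i,j)=\sum_{p\le i,q\le j}a_{pq}$, with $\widetilde A(i,j)=0$ if $i=0$ or $j=0$. For $i<j$, $k<l$ in $[n]$, $R_{ij}^{kl}=\{(p,q): i\le p<j,\ k\le q<l\}$ and $\widetilde R_{ij}^{kl}$ is its $0/1$ indicator matrix. $E(A)$ (essential rectangles): those $R_{ij}^{kl}$ with, for all $(p,q)\in R_{ij}^{kl}$, $\widetilde A(p,k)=\widetilde A(p,k-1)$, $\widetilde A(p,l)=\widetilde A(p,l-1)+1$, $\widetilde A(i,q)=\widetilde A(i-1,q)$, $\widetilde A(j,q)=\widetilde A(j-1,q)+1$. $E^*(A)$ (dual essential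 rectangles): those with $\widetilde A(p,k)=\widetilde A(p,k-1)+1$, $\widetilde A(p,l)=\widetilde A(p,l-1)$, $\widetilde A(i,q)=\widetilde A(i-1,q)+1$, $\widetilde A(j,q)=\widetilde A(j-1,q)$. The operator $r_{ij}^{kl}$ sends $A$ to the ASM with corner sum matrix $\widetilde A+\widetilde R_{ij}^{kl}$ if $R_{ij}^{kl}\in E(A)$, $\widetilde A-\widetilde R_{ij}^{kl}$ if $R_{ij}^{kl}\in E^*(A)$, $\widetilde A$ otherwise. The bigrassmannian statistic is $\beta(A)=\sum_{i,j=1}^n\min(i,j)-\sum_{i,j=1}^n\widetilde A(i,j)$. ASM graph edge: $A\xrightarrow{ij,kl}B$ if $B=r_{ij}^{kl}(A)$ and $\beta(A)<\beta(B)$. *)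

(* Indices i,j,k,l,p,q of the paper are 1-based naturals;
   matrix entry a_{pq} (1-based) is A (p-1) (q-1) with A : 'M[R]_n (0-based ordinals). *)
From HB Require Import structures.
From mathcomp Require Import all_boot all_order all_algebra.
Set Implicit Arguments. Unset Strict Implicit. Unset Printing Implicit Defensive.
Import Order.TTheory GRing.Theory Num.Theory.
Local Open Scope ring_scope.

Section ASM.
Variable R : realFieldType.

Definition is_ASM (n : nat) (A : 'M[R]_n) : Prop :=
  [/\ (forall p q : 'I_n, A p q \in [:: -1; 0; 1]),
      (forall p q : 'I_n, \sum_(q' < n | (q' <= q)%N) A p q' \in [:: 0; 1]),
      (forall p q : 'I_n, \sum_(p' < n | (p' <= p)%N) A p' q \in [:: 0; 1]),
      (forall p : 'I_n, \sum_(q < n) A p q = 1)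
    & (forall q : 'I_n, \sum_(p < n) A p q = 1)].

(* corner sum  \tilde A(i,j) = sum_{p<=i, q<=j} a_{pq}  (1-based i,j in 0..n;
   equals 0 when i = 0 or j = 0) *)
Definition csum (n : nat) (A : 'M[R]_n) (i j : nat) : R :=
  \sum_(p < n | (p < i)%N) \sum_(q < n | (q < j)%N) A p q.

Definition in_rect (i j k l p q : nat) : bool :=
  (i <= p < j)%N && (k <= q < l)%N.

Definition essential (n : nat) (A : 'M[R]_n) (i j k l : nat) : Prop :=
  forall p q : nat, in_rect i j k l p q ->
    [/\ csum A p k = csum A p k.-1,
        csum A p l = csum A p l.-1 + 1,
        csum A i q = csum A i.-1 q
      & csum A j q = csum A j.-1 q + 1].

Definition dual_essential (n : nat) (A : 'M[R]_n) (i j k l : nat) : Prop :=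
  forall p q : nat, in_rect i j k l p q ->
    [/\ csum A p k = csum A p k.-1 + 1,
        csum A p l = csum A p l.-1,
        csum A i q = csum A i.-1 q + 1
      & csum A j q = csum A j.-1 q].

(* B = r_{ij}^{kl}(A), expressed through corner sum matrices (which determine
   the matrix) *)
Definition rop_rel (n : nat) (A B : 'M[R]_n) (i j k l : nat) : Prop :=
  [/\ essential A i j k l ->
        (forall p q : nat, (p <= n)%N -> (q <= n)%N ->
           csum B p q = csum A p q + (in_rect i j k l p q)%:R),
      dual_essential A i j k l ->
        (forall p q : nat, (p <= n)%N -> (q <= n)%N ->
           csum B p q = csum A p q - (in_rect i j k l p q)%:R)
    & (~ essential A i j k l /\ ~ dual_essential A i j k l) ->
        (forall p q : nat, (p <= n)%N -> (q <= n)%N ->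
           csum B p q = csum A p q)].

Definition beta (n : nat) (A : 'M[R]_n) : R :=
  \sum_(i < n) \sum_(j < n) (minn i.+1 j.+1)%:R
  - \sum_(i < n) \sum_(j < n) csum A i.+1 j.+1.

Definition asm_edge (n : nat) (A B : 'M[R]_n) (i j k l : nat) : Prop :=
  rop_rel A B i j k l /\ beta A < beta B.

End ASM.

(* Everything is read off the corner sum matrices.  The matrix
   F = (e_i - e_j)(e_k - e_l)^T has the indicator of R as corner sum matrix,
   and a matrix is determined by its corner sums, so A = B + F iff
   csum A = csum B + [R] ("A is the rectangle shift of B").
   - Edge => shift: the operator r_{ij}^{kl} moves csum by +[R], -[R] or 0,
     which moves beta by -|R|, +|R| or 0; only -[R] can increase beta.
   - Shift => edge: essentiality of R in B transfers to dual essentiality of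
     R in A, so r_{ij}^{kl}(A) = B, and beta(B) = beta(A) + |R| > beta(A).
   - Shift => ASM: an ASM is a matrix whose rows and whose columns satisfy the
     partial-sum conditions; the essential conditions of B at rows i, j say
     exactly that adding +-[R] keeps the row partial sums in {0,1}, and the
     column case is the row case for the transposed matrices. *)
From HB Require Import structures.
From mathcomp Require Import all_boot all_order all_algebra.
From mathcomp Require Import zify ring lra.
From Stdlib Require Import Classical.
Set Implicit Arguments. Unset Strict Implicit. Unset Printing Implicit Defensive.
Import Order.TTheory GRing.Theory Num.Theory.
Local Open Scope ring_scope.

Lemma sum_ord_ltS (V : nmodType) (n : nat) (f : 'I_n -> V) (q : 'I_n) :
  \sum_(x < n | (x < q.+1)%N) f x = f q + \sum_(x < n | (x < q)%N) f x.
Proof.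
rewrite (bigD1 q) //=; congr (_ + _); apply: eq_bigl => x.
by rewrite ltnS ltn_neqAle andbC.
Qed.

Section CornerSums.
Variables (R : realFieldType) (n : nat).
Implicit Types (A B M : 'M[R]_n).

Lemma csumS_row M (p : 'I_n) Q :
  csum M p.+1 Q = csum M p Q + \sum_(q < n | (q < Q)%N) M p q.
Proof. by rewrite /csum sum_ord_ltS addrC. Qed.

Lemma csum_entry M (p q : 'I_n) :
  M p q = csum M p.+1 q.+1 - csum M p q.+1 - csum M p.+1 q + csum M p q.
Proof. rewrite !csumS_row sum_ord_ltS; lra. Qed.

Lemma csum_inj A B :
  (forall P Q, (P <= n)%N -> (Q <= n)%N -> csum A P Q = csum B P Q) -> A = B.
Proof.
move=> eqAB; apply/matrixP => p q; have hp := ltn_ord p; have hq := ltn_ord q.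
by rewrite csum_entry (csum_entry B) !eqAB // ltnW.
Qed.

Lemma csumD A B P Q : csum (A + B) P Q = csum A P Q + csum B P Q.
Proof.
rewrite /csum -big_split; apply: eq_bigr => p _; rewrite -big_split.
by apply: eq_bigr => q _; rewrite mxE.
Qed.

Lemma csum_tr M P Q : csum M^T P Q = csum M Q P.
Proof.
rewrite /csum exchange_big; apply: eq_bigr => q _; apply: eq_bigr => p _.
by rewrite mxE.
Qed.

Lemma row_prefixE M (p q : 'I_n) :
  \sum_(q' < n | (q' <= q)%N) M p q' = csum M p.+1 q.+1 - csum M p q.+1.
Proof. by rewrite csumS_row addrAC subrr add0r. Qed.

Lemma row_sumE M (p : 'I_n) : \sum_(q < n) M p q = csum M p.+1 n - csum M p n.
Proof.
by rewrite csumS_row addrAC subrr add0r; apply: eq_bigl => q; rewrite ltn_ord.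
Qed.

End CornerSums.

Section RectangleMatrix.
Variables (R : realFieldType) (n : nat).

(* The p-th coordinate (0-based) of e_i - e_j (1-based indices i, j). *)
Definition ediff (i j p : nat) : R := (p.+1 == i)%:R - (p.+1 == j)%:R.

Definition rect_mx (i j k l : nat) : 'M[R]_n :=
  \matrix_(p, q) (ediff i j p * ediff k l q).

Lemma sum_prefix_indicator (i P : nat) : (1 <= i <= n)%N ->
  \sum_(p < n | (p < P)%N) ((p.+1 == i)%:R : R) = (i <= P)%:R.
Proof.
case/andP=> i_gt0 i_le_n; have hi : (i.-1 < n)%N by rewrite prednK.
rewrite big_mkcond (bigD1 (Ordinal hi)) //= prednK // eqxx big1 ?addr0.
  by case: ifP; case: leqP => //; lia.
move=> p /eqP neq_p; case: ifP => // _; case: eqP => // eq_p.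
by case: neq_p; apply: val_inj => /=; rewrite -eq_p.
Qed.

Lemma sum_prefix_ediff (i j P : nat) : (1 <= i)%N -> (i < j <= n)%N ->
  \sum_(p < n | (p < P)%N) ediff i j p = (i <= P < j)%N%:R.
Proof.
move=> i_gt0 /andP[ij jn]; rewrite sumrB !sum_prefix_indicator; try lia.
by case: (leqP i P) => iP; case: (leqP j P) => jP /=; rewrite ?subrr ?subr0 //; lia.
Qed.

Variables (i j k l : nat).
Hypotheses (i_gt0 : (1 <= i)%N) (ij : (i < j)%N) (jn : (j <= n)%N).
Hypotheses (k_gt0 : (1 <= k)%N) (kl : (k < l)%N) (ln : (l <= n)%N).

Lemma csum_rect_mx P Q : csum (rect_mx i j k l) P Q = (in_rect i j k l P Q)%:R.
Proof.
rewrite /csum /in_rect.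
under eq_bigr => p _ do under eq_bigr => q _ do rewrite mxE.
under eq_bigr => p _ do rewrite -mulr_sumr sum_prefix_ediff ?ij ?kl //.
rewrite -mulr_suml sum_prefix_ediff ?ij ?jn //.
by case: (_ && _); rewrite ?mul1r ?mul0r.
Qed.

End RectangleMatrix.

Arguments ediff {R} i j p.
Arguments rect_mx {R n} i j k l.

Lemma corner_pattern (R : realFieldType) (x y : R) (p q i j k l : nat) :
  i != j -> k != l ->
  [/\ (p = i /\ q = k -> x - y = 1), (p = i /\ q = l -> x - y = -1),
      (p = j /\ q = k -> x - y = -1), (p = j /\ q = l -> x - y = 1)
    & (~ (p = i /\ q = k) -> ~ (p = i /\ q = l) ->
       ~ (p = j /\ q = k) -> ~ (p = j /\ q = l) -> x = y)] <->
  x = y + ((p == i)%:R - (p == j)%:R) * ((q == k)%:R - (q == l)%:R).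
Proof.
move=> ij kl.
have [pi | pi] := eqVneq p i; have [pj | pj] := eqVneq p j;
  have [qk | qk] := eqVneq q k; have [ql | ql] := eqVneq q l;
  try (exfalso; lia);
  rewrite ?pi ?pj ?qk ?ql ?eqxx ?(negbTE pi) ?(negbTE pj) ?(negbTE qk) ?(negbTE ql)
    ?(eq_sym j) ?(eq_sym l) ?(negbTE ij) ?(negbTE kl) /=.
all: split=> [[h1 h2 h3 h4 h5] | ->]; last by split=> // *; try (exfalso; lia); lra.
all: first [ move: (h1 ltac:(by split)) | move: (h2 ltac:(by split))
           | move: (h3 ltac:(by split)) | move: (h4 ltac:(by split))
           | move: (h5 ltac:(lia) ltac:(lia) ltac:(lia) ltac:(lia)) ]; lra.
Qed.

Lemma rect_mx_pattern (R : realFieldType) (n i j k l : nat) (A B : 'M[R]_n) :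
  i != j -> k != l ->
  (forall p q : 'I_n,
      [/\ (p.+1 = i /\ q.+1 = k -> A p q - B p q = 1),
          (p.+1 = i /\ q.+1 = l -> A p q - B p q = -1),
          (p.+1 = j /\ q.+1 = k -> A p q - B p q = -1),
          (p.+1 = j /\ q.+1 = l -> A p q - B p q = 1)
        & (~ (p.+1 = i /\ q.+1 = k) -> ~ (p.+1 = i /\ q.+1 = l) ->
           ~ (p.+1 = j /\ q.+1 = k) -> ~ (p.+1 = j /\ q.+1 = l) ->
           A p q = B p q)]) <->
  A = B + rect_mx i j k l.
Proof.
move=> ij kl; split=> [pattern | -> p q].
  apply/matrixP => p q; rewrite !mxE.
  exact/(corner_pattern _ _ _ _ ij kl)/pattern.
by apply/(corner_pattern _ _ _ _ ij kl); rewrite !mxE.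
Qed.

Section RowConditions.
Variables (R : realFieldType) (n : nat).
Implicit Types (M : 'M[R]_n).

Definition row_ASM M : Prop :=
  (forall p q : 'I_n, \sum_(q' < n | (q' <= q)%N) M p q' \in [:: 0; 1]) /\
  (forall p : 'I_n, \sum_(q < n) M p q = 1).

(* An entry is a difference of two consecutive partial sums in {0,1}. *)
Lemma entry_range M (p q : 'I_n) :
  (forall q : 'I_n, \sum_(q' < n | (q' <= q)%N) M p q' \in [:: 0; 1]) ->
  M p q \in [:: -1; 0; 1].
Proof.
move=> prefix01.
have prev01 : \sum_(q' < n | (q' < q)%N) M p q' \in [:: 0; 1].
  case: q => [[|q] lt_q] /=; first by rewrite big_pred0 // inE eqxx.
  exact: (prefix01 (Ordinal (ltnW lt_q))).
have -> : M p q = \sum_(q' < n | (q' <= q)%N) M p q' - \sum_(q' < n | (q' < q)%N) M p q'.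
  by under eq_bigl => q' do rewrite -ltnS; rewrite sum_ord_ltS addrK.
move: (prefix01 q) prev01; rewrite !inE.
by move=> /orP[]/eqP-> /orP[]/eqP->; rewrite ?subrr ?subr0 ?sub0r ?eqxx ?orbT.
Qed.

Lemma is_ASM_rowsP M : is_ASM M <-> row_ASM M /\ row_ASM M^T.
Proof.
have colE (q : 'I_n) P : \sum_(p' < n | P p') M^T q p' = \sum_(p' < n | P p') M p' q.
  by apply: eq_bigr => p' _; rewrite mxE.
split=> [[_ rows cols rowsum colsum] | [[rows rowsum] [cols colsum]]].
  by split; split=> // *; rewrite colE.
split=> // [p q | p q | q]; last 2 first.
- by rewrite -colE.
- by rewrite -(colE q).
exact: entry_range.
Qed.

End RowConditions.

Section RectangleShift.
Variables (R : realFieldType) (n : nat).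
Implicit Types (A B : 'M[R]_n).

Definition rect_shift A B (i j k l : nat) : Prop :=
  forall P Q, (P <= n)%N -> (Q <= n)%N ->
    csum A P Q = csum B P Q + (in_rect i j k l P Q)%:R.

Definition rect_area (i j k l : nat) : R :=
  \sum_(p < n) \sum_(q < n) (in_rect i j k l p.+1 q.+1)%:R.

Lemma rect_shift_tr A B i j k l :
  rect_shift A B i j k l -> rect_shift A^T B^T k l i j.
Proof. by move=> sh P Q hP hQ; rewrite !csum_tr sh // /in_rect andbC. Qed.

Lemma beta_rect_shift A B (c : R) i j k l :
  (forall P Q, (P <= n)%N -> (Q <= n)%N ->
     csum B P Q = csum A P Q + c * (in_rect i j k l P Q)%:R) ->
  beta B = beta A - c * rect_area i j k l.
Proof.
move=> sh; rewrite /beta /rect_area mulr_sumr.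
have -> : \sum_(p < n) \sum_(q < n) csum B p.+1 q.+1 =
    \sum_(p < n) \sum_(q < n) csum A p.+1 q.+1 +
    \sum_(p < n) c * \sum_(q < n) (in_rect i j k l p.+1 q.+1)%:R.
  rewrite -big_split; apply: eq_bigr => p _; rewrite mulr_sumr -big_split.
  by apply: eq_bigr => q _; rewrite sh.
by rewrite opprD addrA.
Qed.

Lemma row_ASM_rect_shift A B (i j k l : nat) :
  (1 <= i)%N -> (i < j)%N -> (l <= n)%N ->
  (forall Q, (k <= Q < l)%N -> csum B i Q = csum B i.-1 Q) ->
  (forall Q, (k <= Q < l)%N -> csum B j Q = csum B j.-1 Q + 1) ->
  rect_shift A B i j k l -> row_ASM B -> row_ASM A.
Proof.
move=> i_gt0 ij ln rowi rowj sh [prefixB sumB].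
split=> [p q | p]; have p1n : (p.+1 <= n)%N := ltn_ord p; have pn := ltnW p1n.
  have := prefixB p q; rewrite !row_prefixE !sh // /in_rect.
  case: (boolP (k <= q.+1 < l)%N) => hQ; rewrite ?andbF ?addr0 //= !andbT.
  case: (eqVneq p.+1 i) => [pi | pi].
    have [-> ->] : (i <= p.+1 < j)%N /\ (i <= p < j)%N = false by lia.
    have := rowi _ hQ; rewrite -pi /= => -> _; move: (csum B p q.+1) => c.
    by rewrite addr0 addrAC subrr add0r !inE eqxx orbT.
  case: (eqVneq p.+1 j) => [pj | pj].
    have [-> ->] : (i <= p.+1 < j)%N = false /\ (i <= p < j)%N by lia.
    have := rowj _ hQ; rewrite -pj /= => -> _; move: (csum B p q.+1) => c.
    by rewrite addr0 subrr inE eqxx.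
  have -> : (i <= p.+1 < j)%N = (i <= p < j)%N by lia.
  move: (csum B p.+1 q.+1) (csum B p q.+1) (i <= p < j)%N%:R => c c' d.
  by rewrite opprD addrACA subrr addr0.
have nl : (n < l)%N = false by lia.
by have := sumB p; rewrite !row_sumE !sh // /in_rect nl !andbF !addr0.
Qed.

Variables (i j k l : nat).
Hypotheses (i_gt0 : (1 <= i)%N) (ij : (i < j)%N) (jn : (j <= n)%N).
Hypotheses (k_gt0 : (1 <= k)%N) (kl : (k < l)%N) (ln : (l <= n)%N).

Lemma rect_area_gt0 : 0 < rect_area i j k l.
Proof.
have hi : (i.-1 < n)%N by lia.
have hk : (k.-1 < n)%N by lia.
rewrite /rect_area (bigD1 (Ordinal hi)) //= (bigD1 (Ordinal hk)) //= !prednK //.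
have -> : in_rect i j k l i k by rewrite /in_rect; lia.
rewrite -addrA ltr_pwDl // addr_ge0 ?sumr_ge0 // => p _.
by rewrite sumr_ge0.
Qed.

(* A rectangle is never both essential and dual essential (look at (i,k)). *)
Lemma essential_dual_exclusive A :
  essential A i j k l -> dual_essential A i j k l -> False.
Proof.
have ik : in_rect i j k l i k by rewrite /in_rect; lia.
move=> /(_ i k ik) [eA _ _ _] /(_ i k ik) [dA _ _ _].
by move: eA; rewrite dA => /eqP; rewrite -subr_eq0 addrC addKr oner_eq0.
Qed.

Lemma rect_shiftP A B : rect_shift A B i j k l <-> A = B + rect_mx i j k l.
Proof.
split=> [sh | ->]; last by move=> P Q _ _; rewrite csumD csum_rect_mx.
by apply: csum_inj => P Q hP hQ; rewrite csumD csum_rect_mx // sh.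
Qed.

Lemma is_ASM_rect_shift A B :
  is_ASM B -> essential B i j k l -> rect_shift A B i j k l -> is_ASM A.
Proof.
rewrite !is_ASM_rowsP => -[rowsB colsB] essB sh.
have ess_at P Q (hP : (i <= P < j)%N) (hQ : (k <= Q < l)%N) :=
  essB P Q (introT andP (conj hP hQ)).
have ii : (i <= i < j)%N by rewrite leqnn.
have kk : (k <= k < l)%N by rewrite leqnn.
split.
  apply: (row_ASM_rect_shift _ _ _ _ _ sh rowsB) => // Q hQ.
  - by case: (ess_at i Q ii hQ).
  - by case: (ess_at i Q ii hQ).
apply: (row_ASM_rect_shift _ _ _ _ _ (rect_shift_tr sh) colsB) => // P hP;
  rewrite !csum_tr.
- by case: (ess_at P k hP kk).
- by case: (ess_at P k hP kk).
Qed.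

Lemma rect_shift_dual_essential A B :
  essential B i j k l -> rect_shift A B i j k l -> dual_essential A i j k l.
Proof.
move=> essB sh P Q hPQ; have [colk coll rowi rowj] := essB P Q hPQ.
move: hPQ; rewrite /in_rect => /andP[/andP[iP Pj] /andP[kQ Ql]].
rewrite !sh; try lia.
have [-> ->] : in_rect i j k l P k /\ in_rect i j k l P k.-1 = false.
  by rewrite /in_rect; lia.
have [-> ->] : in_rect i j k l P l = false /\ in_rect i j k l P l.-1.
  by rewrite /in_rect; lia.
have [-> ->] : in_rect i j k l i Q /\ in_rect i j k l i.-1 Q = false.
  by rewrite /in_rect; lia.
have [-> ->] : in_rect i j k l j Q = false /\ in_rect i j k l j.-1 Q.
  by rewrite /in_rect; lia.
by rewrite /= colk coll rowi rowj; split; ring.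
Qed.

Lemma rect_shift_edge A B :
  essential B i j k l -> rect_shift A B i j k l -> asm_edge A B i j k l.
Proof.
move=> essB sh; have dualA := rect_shift_dual_essential essB sh.
have shB : forall P Q, (P <= n)%N -> (Q <= n)%N ->
    csum B P Q = csum A P Q + (-1) * (in_rect i j k l P Q)%:R.
  by move=> P Q hP hQ; rewrite sh // mulN1r addrK.
split; first split.
- by move=> /essential_dual_exclusive /(_ dualA).
- by move=> _ P Q hP hQ; rewrite shB // mulN1r.
- by case.
by rewrite (beta_rect_shift shB) mulN1r opprK ltrDl rect_area_gt0.
Qed.

(* Edge => shift: among the three possible moves of the corner sums, only
   csum B = csum A - [R] makes beta increase. *)
Lemma edge_rect_shift A B : asm_edge A B i j k l -> rect_shift A B i j k l.
Proof.
case=> -[up down still] beta_lt; have area := rect_area_gt0.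
have [essA | not_essA] := classic (essential A i j k l).
  have : beta B = beta A - 1 * rect_area i j k l.
    by apply: beta_rect_shift => P Q hP hQ; rewrite mul1r up.
  lra.
have [dualA | not_dualA] := classic (dual_essential A i j k l).
  by move=> P Q hP hQ; rewrite (down dualA) // subrK.
have : beta B = beta A - 0 * rect_area i j k l.
  by apply: beta_rect_shift => P Q hP hQ; rewrite mul0r addr0 still.
lra.
Qed.

End RectangleShift.

Theorem mainTheorem6 (R : realFieldType) (n i j k l : nat) (A B : 'M[R]_n) :
  is_ASM B ->
  (1 <= i)%N -> (i < j)%N -> (j <= n)%N ->
  (1 <= k)%N -> (k < l)%N -> (l <= n)%N ->
  essential B i j k l ->
  ((is_ASM A /\ asm_edge A B i j k l) <->
   (forall p q : 'I_n,
      [/\ (p.+1 = i /\ q.+1 = k -> A p q - B p q = 1),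
          (p.+1 = i /\ q.+1 = l -> A p q - B p q = -1),
          (p.+1 = j /\ q.+1 = k -> A p q - B p q = -1),
          (p.+1 = j /\ q.+1 = l -> A p q - B p q = 1)
        & (~ (p.+1 = i /\ q.+1 = k) -> ~ (p.+1 = i /\ q.+1 = l) ->
           ~ (p.+1 = j /\ q.+1 = k) -> ~ (p.+1 = j /\ q.+1 = l) ->
           A p q = B p q)])).
Proof.
move=> asmB i_gt0 ij jn k_gt0 kl ln essB.
have i_neq_j : i != j by rewrite ltn_eqF.
have k_neq_l : k != l by rewrite ltn_eqF.
rewrite rect_mx_pattern // -rect_shiftP //.
split=> [[_ edge] | sh]; first exact: edge_rect_shift edge.
by split; [apply: is_ASM_rect_shift sh | apply: rect_shift_edge].
Qed.
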